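(* Let $A$ be a finite alphabet. Every sequence $(w_n)_{n\ge0}$ of words over $A$ admits an adequate subsequence.
   Context: For $B\subseteq A$, let $B^{=}=\{w\in B^*:\mathrm{alph}(w)=B\}$ (words whose set of letters is exactly $B$). A factorization pattern is $(\vec u,\vec B)$ with $\vec u=(u_0,\dots,u_p)\in(A^* )^{p+1}$ and $\vec B=(B_1,\dots,B_p)$ nonempty subsets of $A$, $p\ge0$. For $n\ge0$ let $L_n(\vec u,\vec B)=u_0(B_1^{=})^nu_1(B_2^{=})^nu_2\cdots u_{p-1}(B_p^{=})^nu_p$. A sequence $(w_n)_n$ is $(\vec u,\vec B)$-adequate if $w_n\in L_n(\vec u,\vec B)$ for all $n\ge0$, and adequate if it is $(\vec u,\vec B)$-adequate for some factorization pattern $(\vec u,\vec B)$. *)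

From mathcomp Require Import all_boot.
Set Implicit Arguments. Unset Strict Implicit. Unset Printing Implicit Defensive.

Section Words.
Variable A : finType.

Definition alph (w : seq A) : {set A} := [set x in w].

Definition inBeq (B : {set A}) (w : seq A) : Prop := alph w = B.

Definition inBeqPow (B : {set A}) (n : nat) (w : seq A) : Prop :=
  exists vs : seq (seq A),
    size vs = n /\ (forall v, v \in vs -> inBeq B v) /\ w = flatten vs.

(* A factorization pattern ((u_0,...,u_p),(B_1,...,B_p)) is encoded as
   u_0 together with the list [:: (B_1,u_1); ...; (B_p,u_p)]. *)
Definition pattern := (seq A * seq ({set A} * seq A))%type.

Definition pattern_ok (P : pattern) : Prop :=
  forall Bu, Bu \in P.2 -> Bu.1 != set0.

Fixpoint inLtail (n : nat) (ps : seq ({set A} * seq A)) (w : seq A) : Prop :=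
  match ps with
  | [::] => w = [::]
  | (B, u) :: ps' =>
      exists v r, w = v ++ u ++ r /\ inBeqPow B n v /\ inLtail n ps' r
  end.

(* membership in L_n(u, B) = u_0 (B_1^=)^n u_1 ... (B_p^=)^n u_p *)
Definition inL (n : nat) (P : pattern) (w : seq A) : Prop :=
  exists r, w = P.1 ++ r /\ inLtail n P.2 r.

Definition adequate_for (P : pattern) (ws : nat -> seq A) : Prop :=
  forall n, inL n P (ws n).

Definition adequate (ws : nat -> seq A) : Prop :=
  exists P : pattern, pattern_ok P /\ adequate_for P ws.

End Words.

From mathcomp Require Import all_boot zify.
From Stdlib Require Import ClassicalEpsilon.
Set Implicit Arguments. Unset Strict Implicit. Unset Printing Implicit Defensive.

(* Call a sequence
   hereditarily adequate when each of its tails n |-> v (k + n) is adequate, and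
   call w good when some subsequence of w is hereditarily adequate.  Since the
   languages L_n(P) decrease for n >= 1, hereditary adequacy passes to
   subsequences, and since patterns can be concatenated, it is stable under
   termwise concatenation.  We show that every sequence of words over an alphabet
   C is good, by induction on #|C|:
   - if, for every M, infinitely many terms are products of M+1 words of
     alphabet exactly C, a fast-growing subsequence matches the pattern spreading
     the letters of one of its terms among blocks over C (good_unbounded);
   - otherwise, beyond some index no term has M+1 such blocks, and we induct on M
     (good_bounded): either infinitely many terms miss some letter a, and the
     induction on the alphabet applies, or infinitely many terms have alphabet C;
     each of them is cut as x a r at its shortest prefix of alphabet C, where x
     lives over C minus a and r is not a product of M+1 blocks, and the pieces
     are glued back (good_full_step). *)

Definition increasing (phi : nat -> nat) : Prop := forall n, phi n < phi n.+1.

Lemma increasing_comp phi psi : increasing phi -> increasing psi -> increasing (phi \o psi).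
Proof. by move=> Hphi Hpsi n; apply: (homo_ltn ltn_trans Hphi). Qed.

Lemma increasing_shift psi k n : increasing psi -> psi k + n <= psi (k + n).
Proof.
move=> Hpsi; elim: n => [|n IH]; first by rewrite !addn0.
by rewrite !addnS (leq_ltn_trans IH).
Qed.

Lemma extract_increasing (P : nat -> Prop) :
  (forall m, exists i, m <= i /\ P i) -> exists psi, increasing psi /\ forall n, P (psi n).
Proof.
move=> /choice [g Hg].
exists (fix psi n := if n is n'.+1 then g (psi n').+1 else g 0).
by split=> [n|[|n]] /=; [exact: (Hg _).1 | exact: (Hg _).2 | exact: (Hg _).2].
Qed.

Lemma infinite_pigeonhole (T : finType) (Q : nat -> T -> Prop) :
  (forall i, exists t, Q i t) -> exists t, forall m, exists i, m <= i /\ Q i t.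
Proof.
move=> HQ; apply: NNPP => Hnone.
have /choice [bnd Hbnd] : forall t, exists m, forall i, m <= i -> ~ Q i t.
  move=> t; apply: NNPP => Hinf; apply: Hnone; exists t => m; apply: NNPP => Hm.
  by apply: Hinf; exists m => i le_mi HQi; apply: Hm; exists i.
have [t Ht] := HQ (\max_t bnd t).
by apply: Hbnd Ht; exact: leq_bigmax.
Qed.

Section Words.
Variable A : finType.
Implicit Types (B C : {set A}) (u v x y t : seq A).

Lemma alph_cat u v : alph (u ++ v) = alph u :|: alph v.
Proof. by apply/setP => c; rewrite !inE mem_cat. Qed.

Lemma alph_rcons u c : alph (rcons u c) = c |: alph u.
Proof. by rewrite -cats1 alph_cat setUC; congr (_ :|: _); apply/setP => d; rewrite !inE. Qed.

Lemma alph_subset_nil u : alph u \subset set0 -> u = [::].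
Proof. by case: u => // c u /subsetP /(_ c); rewrite !inE eqxx => /(_ isT). Qed.

Lemma beqpow0 B : inBeqPow B 0 [::].
Proof. by exists [::]. Qed.

Lemma beqpow1 B v : inBeqPow B 1 v <-> alph v = B.
Proof.
split=> [[[|v1 [|? ?]] [//= _ [Hv ->]]]|Hv]; first by rewrite cats0; apply: Hv; rewrite inE.
exists [:: v]; rewrite /= cats0; split=> //; split=> // v'.
by rewrite inE => /eqP ->.
Qed.

Lemma beqpow_cat B m n u v :
  inBeqPow B m u -> inBeqPow B n v -> inBeqPow B (m + n) (u ++ v).
Proof.
move=> [us [<- [Hu ->]]] [vs [<- [Hv ->]]].
exists (us ++ vs); rewrite size_cat flatten_cat; split=> //; split=> // z.
by rewrite mem_cat => /orP [/Hu|/Hv].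
Qed.

Lemma beqpow_split B m n t : inBeqPow B (m + n) t ->
  exists u v, t = u ++ v /\ inBeqPow B m u /\ inBeqPow B n v.
Proof.
move=> [vs [Hs [Hv ->]]]; exists (flatten (take m vs)), (flatten (drop m vs)).
rewrite -flatten_cat cat_take_drop; split=> //; split.
- exists (take m vs); rewrite size_takel ?Hs ?leq_addr //.
  by split=> //; split=> // z /mem_take /Hv.
- exists (drop m vs); rewrite size_drop Hs addKn; split=> //.
  by split=> // z /mem_drop /Hv.
Qed.

Lemma beqpow_alph B n v : 0 < n -> inBeqPow B n v -> alph v = B.
Proof.
case: n => // n _; elim: n v => [|n IH] v; first by move/beqpow1.
rewrite -addn1 => /beqpow_split [u [v' [-> [/IH Hu /beqpow1 Hv']]]].
by rewrite alph_cat Hu Hv' setUid.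
Qed.

(* (B^=)^N is contained in (B^=)^n for 0 < n <= N: merge the last blocks. *)
Lemma beqpow_le B m n v : 0 < m -> m <= n -> inBeqPow B n v -> inBeqPow B m v.
Proof.
move=> m0 le_mn; have -> : n = m.-1 + (n - m.-1) by lia.
move/beqpow_split => [u [u' [-> [Hu Hu']]]].
have -> : m = m.-1 + 1 by lia.
by apply: beqpow_cat Hu _; apply/beqpow1/(beqpow_alph _ Hu'); lia.
Qed.

Lemma beqpow_prepend B n q v :
  0 < n -> alph q \subset B -> inBeqPow B n v -> inBeqPow B n (q ++ v).
Proof.
move=> n0 Hq; rewrite -(prednK n0) -add1n => /beqpow_split [v1 [v2 [-> [/beqpow1 H1 H2]]]].
by rewrite catA; apply: beqpow_cat H2; apply/beqpow1; rewrite alph_cat H1; apply/setUidPr.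
Qed.

Lemma beqpow_append B n p v :
  0 < n -> alph p \subset B -> inBeqPow B n v -> inBeqPow B n (v ++ p).
Proof.
move=> n0 Hp; rewrite -(prednK n0) -addn1 => /beqpow_split [v1 [v2 [-> [H1 /beqpow1 H2]]]].
by rewrite -catA; apply: beqpow_cat H1 _; apply/beqpow1; rewrite alph_cat H2; apply/setUidPl.
Qed.

Lemma beqpow_split_letter B n c t : 0 < n -> c \in B -> inBeqPow B n.+1 t ->
  exists v v', t = v ++ c :: v' /\ inBeqPow B n v /\ alph v' \subset B.
Proof.
move=> n0 cB; rewrite -addn1 => /beqpow_split [t0 [b [-> [H0 /beqpow1 Hb]]]].
have cb : c \in b by rewrite -Hb inE in cB.
case/splitPr: cb Hb => p p'; rewrite alph_cat => Hb.
exists (t0 ++ p), p'; rewrite -catA; split=> //; split.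
- by apply: beqpow_append H0 => //; rewrite -Hb subsetUl.
- by rewrite -Hb -cat1s alph_cat; apply: subset_trans (subsetUr _ _) (subsetUr _ _).
Qed.

Lemma inLtail_le m n ps t : 0 < m -> m <= n -> inLtail n ps t -> inLtail m ps t.
Proof.
move=> m0 le_mn; elim: ps t => [|[B u] ps IH] t //= [v [r [-> [Hv Hr]]]].
by exists v, r; split=> //; split; [exact: beqpow_le Hv | exact: IH].
Qed.

Lemma inL_le m n P t : 0 < m -> m <= n -> inL n P t -> inL m P t.
Proof. by move=> m0 le_mn [r [-> Hr]]; exists r; split=> //; exact: inLtail_le Hr. Qed.

(* Concatenation of patterns: pcat P Q describes the products of the words
   of L_n(P) and L_n(Q) (the last constant word of P is glued to the first one of Q). *)
Fixpoint pcat_tail (u0 : seq A) (ps : seq ({set A} * seq A)) (Q : pattern A) : pattern A :=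
  if ps is (B, u) :: ps' then
    let R := pcat_tail u ps' Q in (u0, (B, R.1) :: R.2)
  else (u0 ++ Q.1, Q.2).

Definition pcat (P Q : pattern A) : pattern A := pcat_tail P.1 P.2 Q.

Lemma pcat_ok P Q : pattern_ok P -> pattern_ok Q -> pattern_ok (pcat P Q).
Proof.
case: P => u0 ps; rewrite /pcat /pattern_ok /=.
elim: ps u0 => [|[B u] ps IH] u0 //= HP HQ Bu.
rewrite inE => /orP [/eqP -> /=|]; first by apply: (HP (B, u)); rewrite mem_head.
by apply: IH => // Bu' H; apply: HP; rewrite inE H orbT.
Qed.

Lemma inL_pcat n P Q x y : inL n P x -> inL n Q y -> inL n (pcat P Q) (x ++ y).
Proof.
case: P => u0 ps [r [-> Hr]] /=; rewrite /pcat /= -catA.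
elim: ps u0 r Hr => [|[B u] ps IH] u0 r /=.
  by move=> -> [r' [-> Hr']]; exists r'; rewrite /= catA.
move=> [v [r1 [-> [Hv Hr1]]]] HQ.
have [r' [E Hr']] := IH u r1 Hr1 HQ.
exists (v ++ (pcat_tail u ps Q).1 ++ r'); split; first by rewrite -E -!catA.
by exists v, r'.
Qed.

Definition spread_tail C (s : seq A) : seq ({set A} * seq A) :=
  [seq (C, [:: c]) | c <- s] ++ [:: (C, [::])].

Definition spread C (s : seq A) : pattern A := ([::], spread_tail C s).

Lemma spread_ok C s : C != set0 -> pattern_ok (spread C s).
Proof.
by move=> C0 Bu; rewrite mem_cat inE => /orP [/mapP [c _ ->]|/eqP ->].
Qed.

Lemma inL_spread0 C s : inL 0 (spread C s) s.
Proof.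
exists s; split=> //; elim: s => [|c s IH] /=.
- by exists [::], [::]; split=> //; split=> //; exact: beqpow0.
- by exists [::], s; split=> //; split=> //; exact: beqpow0.
Qed.

Lemma inL_spread C n s t : 0 < n -> alph s \subset C ->
  inBeqPow C ((size s).+1 * n.+1) t -> inL n (spread C s) t.
Proof.
move=> n0 sC Ht; exists t; split=> //.
elim: s t sC Ht => [|c s IH] t /= sC Ht.
  exists t, [::]; rewrite cats0; split=> //; split=> //.
  by apply: beqpow_le Ht; rewrite // mul1n.
move: Ht; rewrite mulSn => /beqpow_split [t1 [t2 [-> [H1 H2]]]].
have cC : c \in C by apply: (subsetP sC); rewrite inE mem_head.
have [v [v' [-> [Hv Hv']]]] := beqpow_split_letter n0 cC H1.
exists v, (v' ++ t2); rewrite -catA; split=> //; split=> //.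
apply: IH; first by apply: subset_trans sC; apply/subsetP => z; rewrite !inE => ->; rewrite orbT.
exact: beqpow_prepend.
Qed.

(* v is hereditarily adequate when every tail n |-> v (k + n) is adequate;
   unlike adequacy, this survives passing to subsequences. *)
Definition hadequate (v : nat -> seq A) : Prop := forall k, adequate (fun n => v (k + n)).

Definition good (w : nat -> seq A) : Prop := exists phi, increasing phi /\ hadequate (w \o phi).

Lemma hadequate_sub (v : nat -> seq A) psi : increasing psi -> hadequate v -> hadequate (v \o psi).
Proof.
move=> Hpsi Hv k; have [P [HP HL]] := Hv (psi k); exists P; split=> // n /=.
have le_n := increasing_shift k n Hpsi.
have -> : psi (k + n) = psi k + (psi (k + n) - psi k) by lia.
case: n le_n => [|n] le_n; first by rewrite addn0 subnn.
by apply: inL_le (HL _); lia.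
Qed.

Lemma hadequate_const m : hadequate (fun=> m).
Proof. by move=> k; exists (m, [::]); split=> // n; exists [::]; rewrite cats0. Qed.

Lemma hadequate_cat (x y : nat -> seq A) : hadequate x -> hadequate y -> hadequate (fun n => x n ++ y n).
Proof.
move=> Hx Hy k; have [P [HP HLP]] := Hx k; have [Q [HQ HLQ]] := Hy k.
by exists (pcat P Q); split; [exact: pcat_ok | move=> n; exact: inL_pcat].
Qed.

Lemma good_sub (w : nat -> seq A) psi : increasing psi -> good (w \o psi) -> good w.
Proof. by move=> Hpsi [phi [Hphi Hw]]; exists (psi \o phi); split=> //; exact: increasing_comp. Qed.

Lemma good_pigeonhole (T : finType) (Q : nat -> T -> Prop) (w : nat -> seq A) :
  (forall i, exists l, Q i l) ->
  (forall l psi, increasing psi -> (forall n, Q (psi n) l) -> good (w \o psi)) -> good w.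
Proof.
move=> /infinite_pigeonhole [l /extract_increasing [psi [Hpsi HQ]]] Hgood.
exact: good_sub Hpsi (Hgood l psi Hpsi HQ).
Qed.

Lemma good_cat (x : nat -> seq A) m (y w : nat -> seq A) : (forall n, w n = x n ++ m ++ y n) ->
  good x -> (forall phi, increasing phi -> good (y \o phi)) -> good w.
Proof.
move=> Ew [phi [Hphi Hx]] /(_ phi Hphi) [psi [Hpsi Hy]].
exists (phi \o psi); split; first exact: increasing_comp.
move=> k; have [P [HP HL]] := hadequate_cat (hadequate_sub Hpsi Hx)
  (hadequate_cat (hadequate_const m) Hy) k.
by exists P; split=> // n; rewrite /= Ew; exact: HL.
Qed.

(* If, for every M, infinitely many terms are products of M+1 blocks over C,
   then a fast-growing subsequence is hereditarily adequate: from index j on,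
   it matches the pattern spreading the letters of its j-th term. *)
Lemma good_unbounded C (w : nat -> seq A) : C != set0 -> (forall i, alph (w i) \subset C) ->
  (forall M i0, exists i, i0 < i /\ inBeqPow C M.+1 (w i)) -> good w.
Proof.
move=> C0 wC U.
have /choice [f Hf] : forall p : nat * nat, exists i, p.2 < i /\ inBeqPow C p.1.+1 (w i).
  by move=> [M i0]; exact: U.
(* the (k+1)-th term must spread every earlier term with k+2 blocks per letter *)
pose blocks k m := (\max_(i < m.+1) size (w i)).+1 * k.+2.
pose psi := fix psi k := if k is k'.+1 then f (blocks k' (psi k'), psi k') else 0.
have Hpsi : increasing psi by move=> k; exact: (Hf _).1.
exists psi; split=> // j; exists (spread C (w (psi j))); split; first exact: spread_ok.
case=> [|n] /=; first by rewrite addn0; exact: inL_spread0.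
apply: inL_spread => //; rewrite addnS.
apply: beqpow_le (Hf (blocks (j + n) (psi (j + n)), psi (j + n))).2 => //.
have le_j : psi j < (psi (j + n)).+1.
  by rewrite ltnS (leq_trans _ (increasing_shift j n Hpsi)) ?leq_addr.
apply: leqW; apply: leq_mul; last by rewrite !ltnS leq_addl.
by rewrite ltnS; exact: (leq_bigmax (Ordinal le_j)).
Qed.

Lemma shortest_covering_prefix C u : C != set0 -> C \subset alph u ->
  exists x a r, u = x ++ a :: r /\ ~~ (C \subset alph x) /\ C \subset alph (rcons x a).
Proof.
move=> C0; elim/last_ind: u => [|u c IH] Cu.
  by case/set0Pn: C0 => c /(subsetP Cu); rewrite inE.
have [/IH [x [a [r [-> Hx]]]] | Cu'] := boolP (C \subset alph u).
  by exists x, a, (rcons r c); rewrite rcons_cat.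
by exists u, c, [::]; rewrite cats1.
Qed.

Lemma full_prefix_split C u : C != set0 -> alph u = C ->
  exists a x r, u = x ++ a :: r /\ a \in C /\ alph x \subset C :\ a /\
                alph (rcons x a) = C /\ alph r \subset C.
Proof.
move=> C0 uC; have Cu : C \subset alph u by rewrite uC.
have [x [a [r [Eu [Cx Cxa]]]]] := shortest_covering_prefix C0 Cu.
have uxar : alph u = alph (rcons x a) :|: alph r by rewrite Eu -cat_rcons alph_cat.
have Exa : alph (rcons x a) = C.
  by apply/eqP; rewrite eqEsubset Cxa -uC uxar subsetUl.
have aC : a \in C by rewrite -Exa alph_rcons setU11.
exists a, x, r; do !split=> //; last by rewrite -uC uxar subsetUr.
rewrite subsetD1 -Exa alph_rcons subsetUr /=.
by apply: contra Cx => ax; rewrite -Exa alph_rcons (setUidPr _) // sub1set.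
Qed.

Section BoundedBlocks.
Variable C : {set A}.
Hypothesis C0 : C != set0.
Hypothesis good_smaller :
  forall a, a \in C -> forall w : nat -> seq A, (forall i, alph (w i) \subset C :\ a) -> good w.

(* If no term has alphabet C, some letter of C is missing from infinitely many terms. *)
Lemma good_not_full (w : nat -> seq A) :
  (forall i, alph (w i) \subset C) -> (forall i, alph (w i) != C) -> good w.
Proof.
move=> wC wnC; apply: (good_pigeonhole (Q := fun i a => a \in C /\ a \notin alph (w i))).
  move=> i; move: (wnC i); rewrite eqEsubset wC /= => /subsetPn [a aC aw].
  by exists a.
move=> a psi _ Ha; apply: (good_smaller (Ha 0).1) => n /=.
by rewrite subsetD1 wC (Ha n).2.
Qed.

(* Terms of alphabet C and fewer than M+2 blocks: cut each one as x a r at its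
   shortest prefix of alphabet C; x lives over C :\ a and r has fewer than M+1 blocks. *)
Lemma good_full_step M :
  (forall w : nat -> seq A, (forall i, alph (w i) \subset C) ->
     (forall i, ~ inBeqPow C M.+1 (w i)) -> good w) ->
  forall w : nat -> seq A, (forall i, alph (w i) = C) ->
    (forall i, ~ inBeqPow C M.+2 (w i)) -> good w.
Proof.
move=> IHM w wC wM.
apply: (good_pigeonhole (fun i => full_prefix_split C0 (wC i))) => a psi _ Ha.
have /choice [x /choice [r Hxr]] := Ha.
apply: (good_cat (x := x) (m := [:: a]) (y := r)).
- by move=> n; rewrite /= (Hxr n).1.
- by apply: (good_smaller (Hxr 0).2.1) => n; exact: (Hxr n).2.2.1.
- move=> phi _; apply: IHM => n /=; first exact: (Hxr (phi n)).2.2.2.2.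
  move=> Hr; apply: (wM (psi (phi n))); rewrite (Hxr (phi n)).1 -cat_rcons -add1n.
  by apply: beqpow_cat Hr; apply/beqpow1; exact: (Hxr _).2.2.2.1.
Qed.

Lemma good_bounded M (w : nat -> seq A) :
  (forall i, alph (w i) \subset C) -> (forall i, ~ inBeqPow C M.+1 (w i)) -> good w.
Proof.
elim: M w => [|M IHM] w wC wM;
  apply: (good_pigeonhole (Q := fun i b => (alph (w i) == C) = b)) => [i|[] psi _ Hb];
  try by [eexists | apply: good_not_full => n /=; rewrite ?wC ?Hb].
- (* a term of alphabet C is a product of one block *)
  by case: (wM (psi 0)); apply/beqpow1/eqP; rewrite Hb.
- by apply: good_full_step IHM _ _ _ => n /=; [apply/eqP; rewrite Hb | exact: wM].
Qed.

End BoundedBlocks.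

Lemma good_over C (w : nat -> seq A) : (forall i, alph (w i) \subset C) -> good w.
Proof.
have [k] := ubnP #|C|; elim: k C w => // k IHk C w ltCk wC.
have [C_0 | C0] := eqVneq C set0.
  exists id; split=> // j; exists ([::], [::]); split=> // n; exists [::].
  by split=> //; apply: alph_subset_nil; rewrite -C_0.
have good_smaller a : a \in C -> forall v : nat -> seq A,
    (forall i, alph (v i) \subset C :\ a) -> good v.
  move=> aC v vC; apply: (IHk (C :\ a)) => //.
  by move: ltCk; rewrite (cardsD1 a C) aC add1n ltnS.
have [U | [M [i0 HM]]] : (forall M i0, exists i, i0 < i /\ inBeqPow C M.+1 (w i)) \/
    exists M i0, forall i, i0 < i -> ~ inBeqPow C M.+1 (w i).
  have [|noM] := classic (exists M i0, forall i, i0 < i -> ~ inBeqPow C M.+1 (w i)); first by right.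
  left => M i0; apply: NNPP => noi; apply: noM; exists M, i0 => i lt_i Hi.
  by apply: noi; exists i.
- exact: (good_unbounded C0 wC U).
- apply: (good_sub (psi := addn i0.+1)) => [n|]; first by rewrite addnS.
  by apply: (good_bounded C0 good_smaller (M := M)) => n /=; [exact: wC | apply: HM; lia].
Qed.

End Words.

Theorem lemma3 (A : finType) (w : nat -> seq A) :
  exists phi : nat -> nat,
    (forall n, phi n < phi n.+1) /\ adequate (fun n => w (phi n)).
Proof.
have [phi [Hphi Hw]] := good_over (fun i => subsetT (alph (w i))).
by exists phi; split=> //; exact: Hw 0.
Qed.
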